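(* Let $X$ be a Banach space and let $A$ be a separable closed convex bounded subset of $X$ having small combinations of slices. Then $A$ is an SCD set.
   Context: A slice of a convex bounded set $A$ is $S(A,x^*,\varepsilon)=\{x\in A:\ \mathrm{Re}\,x^*(x)>\sup\mathrm{Re}\,x^*(A)-\varepsilon\}$ ($x^*\in X^*$, $\varepsilon>0$). A convex combination of slices of $A$ is a set $\sum_{i=1}^m\lambda_iS_i$ with $\lambda_i>0$, $\sum\lambda_i=1$, $S_i$ slices of $A$. $A$ has small combinations of slices if every slice of $A$ contains convex combinations of slices of $A$ of arbitrarily small diameter. $A$ is an SCD set if there is a sequence $(S_n)$ of slices of $A$ such that $A\subseteq\overline{\mathrm{conv}}(B)$ for every $B\subseteq A$ intersecting every $S_n$. *)

From HB Require Import structures.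
From mathcomp Require Import all_boot all_order all_algebra.
From mathcomp Require Import all_classical all_reals all_analysis.
Set Implicit Arguments. Unset Strict Implicit. Unset Printing Implicit Defensive.
Import Order.TTheory GRing.Theory Num.Theory.
Import numFieldNormedType.Exports.
Local Open Scope classical_set_scope.
Local Open Scope ring_scope.

Section Defs.
Context {R : realType} {X : normedModType R}.

Definition is_dual (f : X -> R) : Prop :=
  (forall (a : R) (x y : X), f (a *: x + y) = a * f x + f y) /\ continuous f.

Definition separable_set (A : set X) : Prop :=
  exists D : set X, [/\ D `<=` A, countable D & A `<=` closure D].

Definition slice (A : set X) (f : X -> R) (e : R) : set X :=
  [set x | A x /\ sup (f @` A) - e < f x].

Definition diam (S : set X) : R :=
  sup [set `|x - y| | x in S & y in S].

Definition comb_slices (A : set X) (m : nat) (lam : 'I_m -> R)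
    (fs : 'I_m -> X -> R) (es : 'I_m -> R) : set X :=
  [set z | exists xs : 'I_m -> X,
     (forall i, slice A (fs i) (es i) (xs i)) /\ z = \sum_(i < m) lam i *: xs i].

Definition is_conv_comb_slices (A : set X) (C : set X) : Prop :=
  exists (m : nat) (lam : 'I_m -> R) (fs : 'I_m -> X -> R) (es : 'I_m -> R),
    [/\ (forall i, 0 < lam i), \sum_(i < m) lam i = 1,
        (forall i, is_dual (fs i) /\ 0 < es i) & C = comb_slices A lam fs es].

Definition small_combinations_of_slices (A : set X) : Prop :=
  forall (f : X -> R) (e : R), is_dual f -> 0 < e ->
  forall eps : R, 0 < eps ->
    exists C : set X, [/\ is_conv_comb_slices A C, C `<=` slice A f e & diam C < eps].

Definition conv_hull (B : set X) : set X :=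
  [set z | exists (m : nat) (lam : 'I_m -> R) (xs : 'I_m -> X),
     [/\ (forall i, 0 <= lam i), \sum_(i < m) lam i = 1, (forall i, B (xs i))
       & z = \sum_(i < m) lam i *: xs i]].

Definition SCD_set (A : set X) : Prop :=
  exists (fs : nat -> X -> R) (es : nat -> R),
    (forall n, is_dual (fs n) /\ 0 < es n) /\
    forall B : set X, B `<=` A ->
      (forall n, B `&` slice A (fs n) (es n) !=set0) ->
      A `<=` closure (conv_hull B).

End Defs.

From HB Require Import structures.
From mathcomp Require Import all_boot all_order all_algebra.
From mathcomp Require Import all_classical all_reals all_analysis.
From mathcomp Require Import ring lra.

Import Order.TTheory GRing.Theory Num.Theory.
Import numFieldNormedType.Exports.
Local Open Scope classical_set_scope.
Local Open Scope ring_scope.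

(* Fix a dense sequence [(a k)] of [A] and, for all [k] and [n], a convex
   combination of slices of [A] within [1/(n+1)] of [a k] whenever there is one.
   Every slice [S] of [A] contains small convex combinations of slices, one of
   which is close to some [a k]; hence the combination chosen for [(k, n)], [n]
   large, lies in [S] up to membership in [A].  The slices of these countably
   many combinations form an SCD sequence: if [B] meets each of them and [z] in
   [A] were not in the closed convex hull of [B], Hahn-Banach would give a slice
   [S] of [A] that [B] misses by a positive margin, while averaging points of [B]
   taken in the slices of the combination attached to [S] gives a point of the
   convex hull of [B] in [S].
   Hahn-Banach is proved by Zorn's lemma; the separating functional is dominated
   by the distance to the cone spanned by [z] minus the convex hull of [B],
   fattened by a ball. *)

Definition linear_form {R : pzRingType} {X : lmodType R} (f : X -> R) :=
  forall a x y, f (a *: x + y) = a * f x + f y.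

Section LinearForm.
Context {R : pzRingType} {X : lmodType R} {f : X -> R}.
Hypothesis f_lin : linear_form f.

Lemma linear_form0 : f 0 = 0.
Proof.
have := f_lin 1 0 0; rewrite scaler0 addr0 mul1r => h.
by apply: (addrI (f 0)); rewrite addr0 -h.
Qed.

Lemma linear_formD x y : f (x + y) = f x + f y.
Proof. by rewrite -[x in LHS]scale1r f_lin mul1r. Qed.

Lemma linear_formZ a x : f (a *: x) = a * f x.
Proof. by rewrite -[_ *: _]addr0 f_lin linear_form0 addr0. Qed.

Lemma linear_formN x : f (- x) = - f x.
Proof. by rewrite -scaleN1r linear_formZ mulN1r. Qed.

Lemma linear_formB x y : f (x - y) = f x - f y.
Proof. by rewrite linear_formD linear_formN. Qed.

Lemma linear_form_sum m (lam : 'I_m -> R) (xs : 'I_m -> X) :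
  f (\sum_(i < m) lam i *: xs i) = \sum_(i < m) lam i * f (xs i).
Proof.
rewrite (big_morph f linear_formD linear_form0).
by apply: eq_bigr => i _; rewrite linear_formZ.
Qed.

End LinearForm.

Section HahnBanach.
Context {R : realType} {X : lmodType R}.
Variable q : X -> R.
Hypothesis q_subadd : forall x y, q (x + y) <= q x + q y.
Hypothesis q_homog : forall t x, 0 < t -> q (t *: x) = t * q x.

Lemma sublinear0 : q 0 = 0.
Proof. by have := q_homog 2 0 (ltr0n _ 2); rewrite scaler0 => h; lra. Qed.

Lemma sublinear_unscale t x : 0 < t -> t * q (t^-1 *: x) = q x.
Proof. by move=> t0; rewrite -q_homog // scalerA mulfV ?gt_eqF // scale1r. Qed.

Definition dominated_graph (G : set (X * R)) :=
  [/\ forall x r s, G (x, r) -> G (x, s) -> r = s,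
      forall a x y r s, G (x, r) -> G (y, s) -> G (a *: x + y, a * r + s)
    & forall x r, G (x, r) -> r <= q x].

Definition graph_extend (G : set (X * R)) (x1 : X) (c : R) : set (X * R) :=
  [set p | exists m r t, G (m, r) /\ p = (m + t *: x1, r + t * c)].

Section DominatedGraph.
Context {G : set (X * R)}.
Hypothesis G_dom : dominated_graph G.

Lemma dominated_graph0 {x r} : G (x, r) -> G (0, 0).
Proof.
case: G_dom => _ G_lin _ Gx.
by have := G_lin (-1) x x r r Gx Gx; rewrite scaleN1r addNr mulN1r addNr.
Qed.

Lemma dominated_graphZ t {x r} : G (x, r) -> G (t *: x, t * r).
Proof.
move=> Gx; case: G_dom => _ G_lin _.
by have := G_lin t x 0 r 0 Gx (dominated_graph0 Gx); rewrite !addr0.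
Qed.

Lemma dominated_graphD {x y r s} : G (x, r) -> G (y, s) -> G (x + y, r + s).
Proof.
by case: G_dom => _ G_lin _ Gx Gy; have := G_lin 1 x y r s Gx Gy; rewrite scale1r mul1r.
Qed.

Lemma dominated_graphB {x y r s} : G (x, r) -> G (y, s) -> G (x - y, r - s).
Proof.
move=> Gx Gy; apply: dominated_graphD => //.
by have := dominated_graphZ (-1) Gy; rewrite scaleN1r mulN1r.
Qed.

Variable x1 : X.
Hypothesis x1_notin : ~ (exists r, G (x1, r)).

(* Any [c] between these bounds makes [graph_extend G x1 c] dominated by [q]. *)
Lemma extension_value : G (0, 0) ->
  exists c : R, forall m r, G (m, r) -> r - q (m - x1) <= c /\ c <= q (m + x1) - r.
Proof.
move=> G00; pose S := [set p.2 - q (p.1 - x1) | p in G].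
have gap m1 r1 m2 r2 : G (m1, r1) -> G (m2, r2) ->
    r1 - q (m1 - x1) <= q (m2 + x1) - r2.
  move=> G1 G2; case: G_dom => _ _ G_le.
  have := G_le _ _ (dominated_graphD G1 G2).
  have := q_subadd (m1 - x1) (m2 + x1); rewrite addrACA addNr addr0; lra.
have S_ub : has_ubound S by exists (q (0 + x1) - 0) => _ [[m r] Gm <-]; exact: gap.
exists (sup S) => m r Gm; split.
  by apply: ub_le_sup => //; exists (m, r).
by apply: ge_sup; [exists (0 - q (0 - x1)), (0, 0) | move=> _ [[m' r'] Gm' <-]; exact: gap].
Qed.

Variable c : R.
Hypothesis c_between :
  forall m r, G (m, r) -> r - q (m - x1) <= c /\ c <= q (m + x1) - r.

Lemma graph_extend_functional {x r s} :
  graph_extend G x1 c (x, r) -> graph_extend G x1 c (x, s) -> r = s.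
Proof.
move=> [m [r0 [t [Gm [-> ->]]]]] [m' [r0' [t' [Gm' [Ex ->]]]]].
have [tt'|tt'] := eqVneq t t'.
  subst t'; have Em : m = m' by apply: (addIr (t *: x1)).
  by case: G_dom => G_fun _ _; rewrite Em in Gm; rewrite (G_fun _ _ _ Gm Gm').
exfalso; apply: x1_notin; exists ((t' - t)^-1 * (r0 - r0')).
have -> : x1 = (t' - t)^-1 *: (m - m').
  have -> : m - m' = (t' - t) *: x1.
    by rewrite (canRL (addrK (t *: x1)) Ex) scalerBl addrAC (addrC m') addrK.
  by rewrite scalerA mulVf ?scale1r // subr_eq0 eq_sym.
by apply: dominated_graphZ; apply: dominated_graphB.
Qed.

Lemma graph_extend_linear a {x y r s} :
  graph_extend G x1 c (x, r) -> graph_extend G x1 c (y, s) ->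
  graph_extend G x1 c (a *: x + y, a * r + s).
Proof.
move=> [m [r0 [t [Gm [-> ->]]]]] [m' [r0' [t' [Gm' [-> ->]]]]].
exists (a *: m + m'), (a * r0 + r0'), (a * t + t'); split.
  by case: G_dom => _ G_lin _; apply: G_lin.
congr pair; first by rewrite scalerDr scalerDl scalerA addrACA.
by ring.
Qed.

Lemma graph_extend_dominated {x r} : graph_extend G x1 c (x, r) -> r <= q x.
Proof.
move=> [m [r0 [t [Gm [-> ->]]]]].
have [t_lt0|t_gt0|->] := ltgtP t 0; last first.
- by rewrite scale0r mul0r !addr0; case: G_dom => _ _; apply.
- have [_ ub] := c_between _ _ (dominated_graphZ t^-1 Gm).
  rewrite -(sublinear_unscale t (m + t *: x1) t_gt0) scalerDr scalerA.
  rewrite mulVf ?gt_eqF // scale1r.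
  have := ler_wpM2l (ltW t_gt0) ub.
  by rewrite mulrBr mulrA mulfV ?gt_eqF // mul1r; lra.
- have s_gt0 : 0 < - t by rewrite oppr_gt0.
  have [lb _] := c_between _ _ (dominated_graphZ (- t)^-1 Gm).
  rewrite -(sublinear_unscale (- t) (m + t *: x1) s_gt0) scalerDr scalerA.
  rewrite -[X in (- t)^-1 * X]opprK mulrN mulVf ?gt_eqF // scaleN1r.
  have := ler_wpM2l (ltW s_gt0) lb.
  by rewrite mulrBr mulrA mulfV ?gt_eqF // mul1r; lra.
Qed.

Lemma graph_extend_proper : G (0, 0) -> G `<` graph_extend G x1 c.
Proof.
move=> G00; split.
  by move=> [m r] Gm; exists m, r, 0; rewrite scale0r mul0r !addr0.
move=> sub; apply: x1_notin; exists c; apply: sub.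
by exists 0, 0, 1; rewrite scale1r mul1r !add0r.
Qed.

End DominatedGraph.

Definition line_graph (x0 : X) : set (X * R) :=
  [set p | exists s, p = (s *: x0, s * q x0)].

Lemma line_graph_dominated x0 : dominated_graph (line_graph x0).
Proof.
split.
- move=> x r s [s1 [-> ->]] [s2 [Ex ->]].
  have [x00|x0_neq0] := eqVneq x0 0; first by rewrite x00 sublinear0 !mulr0.
  have /eqP : (s1 - s2) *: x0 = 0 by rewrite scalerBl Ex subrr.
  by rewrite scaler_eq0 (negbTE x0_neq0) orbF subr_eq0 => /eqP ->.
- move=> a x y r s [s1 [-> ->]] [s2 [-> ->]]; exists (a * s1 + s2).
  by rewrite scalerDl scalerA mulrDl mulrA.
- move=> x r [s [-> ->]].
  have [s_lt0|s_gt0|->] := ltgtP s 0; last by rewrite scale0r mul0r sublinear0.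
    have := q_subadd (s *: x0) ((- s) *: x0).
    by rewrite -scalerDl subrr scale0r sublinear0 (@q_homog (- s) x0) ?oppr_gt0 //; lra.
  by rewrite q_homog.
Qed.

(* Zorn's lemma is applied to graphs that are empty or contain [line_graph x0]:
   the empty set has to be allowed since it is the union of the empty chain. *)
Lemma maximal_dominated_graph x0 : exists A, [/\ dominated_graph A,
  line_graph x0 `<=` A & forall B, A `<` B -> ~ dominated_graph B].
Proof.
pose P G := dominated_graph G /\ (G = set0 \/ line_graph x0 `<=` G).
have [A [[A_dom A0] A_max]] : exists A, P A /\ forall B, A `<` B -> ~ P B.
  apply: Zorn_bigcup => F FP F_chain.
  have common p1 p2 : (\bigcup_(G in F) G) p1 -> (\bigcup_(G in F) G) p2 ->
      exists G, [/\ F G, G p1 & G p2].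
    move=> [G1 FG1 G1p] [G2 FG2 G2p].
    by case: (F_chain _ _ FG1 FG2) => sub; [exists G2 | exists G1]; split => //; apply: sub.
  split.
    split.
    - move=> x r s /common/[apply] -[G [FG Gr Gs]].
      by case: (FP _ FG) => -[G_fun _ _] _; exact: G_fun Gr Gs.
    - move=> a x y r s /common/[apply] -[G [FG Gr Gs]]; exists G => //.
      by case: (FP _ FG) => -[_ G_lin _] _; exact: G_lin.
    - by move=> x r [G FG Gx]; case: (FP _ FG) => -[_ _ G_le] _; exact: G_le.
  have [[G [FG G0G]]|noG] := pselect (exists G, F G /\ line_graph x0 `<=` G).
    by right; apply: subset_trans G0G _; exact: bigcup_sup.
  left; apply/seteqP; split => // p [G FG Gp].
  case: (FP _ FG) => _ [G0|G0G]; first by rewrite G0 in Gp.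
  by exfalso; apply: noG; exists G.
have L00 : line_graph x0 (0, 0) by exists 0; rewrite scale0r mul0r.
have L_A : line_graph x0 `<=` A.
  case: A0 => // A0; exfalso; apply: (A_max (line_graph x0)).
    by split; [rewrite A0 | move=> /(_ _ L00); rewrite A0].
  by split; [exact: line_graph_dominated | right].
exists A; split => // B AB B_dom; apply: (A_max B AB); split => //.
by right; apply: subset_trans L_A (properW AB).
Qed.

Theorem hahn_banach x0 : exists f : X -> R,
  [/\ linear_form f, forall x, f x <= q x & f x0 = q x0].
Proof.
have [A [A_dom L_A A_max]] := maximal_dominated_graph x0.
have A00 : A (0, 0) by apply: L_A; exists 0; rewrite scale0r mul0r.
have A_total x : exists r, A (x, r).
  apply: contrapT => x_notin.
  have [c c_between] := extension_value A_dom x A00.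
  apply: (A_max (graph_extend A x c)); first exact: graph_extend_proper.
  split=> [y r s|a y z r s|y r].
  - exact (graph_extend_functional A_dom x x_notin c).
  - exact (graph_extend_linear A_dom x c a).
  - exact (graph_extend_dominated A_dom x c c_between).
pose f x := xget 0 [set r | A (x, r)].
have Af x : A (x, f x) by exact: xgetPex (A_total x).
case: A_dom => A_fun A_lin A_le; exists f; split.
- by move=> a x y; exact: A_fun (Af _) (A_lin _ _ _ _ _ (Af x) (Af y)).
- by move=> x; exact: A_le.
- by apply: A_fun (Af _) _; apply: L_A; exists 1; rewrite scale1r mul1r.
Qed.

End HahnBanach.

Section NormedDual.
Context {R : realType} {X : normedModType R}.

Lemma linear_form_continuous (f : X -> R) :
  linear_form f -> (forall x, `|f x| <= `|x|) -> continuous f.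
Proof.
move=> f_lin f_le x; apply/cvgrPdist_lt => e e_gt0.
apply/nbhs_ballP; exists e => // y; rewrite -ball_normE /= => xy.
by rewrite -linear_formB //; apply: le_lt_trans (f_le _) xy.
Qed.

Lemma dual_bounded {f : X -> R} :
  is_dual f -> exists2 k, 0 < k & forall x, `|f x| <= k * `|x|.
Proof.
move=> [f_lin f_cont].
have f0 : f 0 = 0 := linear_form0 f_lin.
have /cvgrPdist_lt/(_ 1 ltr01)/nbhs_ballP[e e_gt0 f_small] := f_cont 0.
exists (2 / e) => [|x]; first by rewrite divr_gt0.
have [->|x_neq0] := eqVneq x 0; first by rewrite f0 !normr0 mulr0.
have x_gt0 : 0 < `|x| by rewrite normr_gt0.
pose c := e / 2 / `|x|.
have c_gt0 : 0 < c by rewrite !divr_gt0.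
have : ball (0 : X) e (c *: x).
  rewrite -ball_normE /= sub0r normrN normrZ gtr0_norm // divfK ?gt_eqF //.
  by rewrite ltr_pdivrMr // ltr_pMr // ltr1n.
move=> /f_small /=; rewrite f0 sub0r normrN linear_formZ // normrM gtr0_norm //.
rewrite -ltr_pdivlMl // mulr1 => /ltW.
by rewrite /c !invf_div mulrC.
Qed.

Lemma dual0 : is_dual (fun _ : X => 0 : R).
Proof. by split; [move=> *; rewrite mulr0 addr0 | exact: cst_continuous]. Qed.

Lemma dual_image_ubound {f : X -> R} {A : set X} {M} :
  is_dual f -> (forall x, A x -> `|x| <= M) -> has_ubound (f @` A).
Proof.
move=> /dual_bounded[k k_gt0 f_le] A_le; exists (k * M) => _ [x Ax <-].
by apply: le_trans (ler_norm _) (le_trans (f_le x) _); rewrite ler_pM2l // A_le.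
Qed.

Lemma closure_gap (S : set X) z :
  ~ closure S z -> exists2 d, 0 < d & forall w, S w -> d <= `|z - w|.
Proof.
move=> z_notin; apply: contrapT => no_gap; apply: z_notin => N /nbhs_ballP[e e_gt0 eN].
apply: contrapT => SN_empty; apply: no_gap; exists e => // w Sw.
rewrite leNgt; apply/negP => zw; apply: SN_empty; exists w; split => //.
by apply: eN; rewrite -ball_normE.
Qed.

End NormedDual.

Section Cone.
Context {R : realType} {X : lmodType R}.

Definition convex_closed (V : set X) := forall v1 v2 a b,
  0 <= a -> 0 <= b -> a + b = 1 -> V v1 -> V v2 -> V (a *: v1 + b *: v2).

Definition cone (V : set X) := [set y | exists t v, [/\ 0 <= t, V v & y = t *: v]].

Lemma coneZ V t y : 0 <= t -> cone V y -> cone V (t *: y).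
Proof.
move=> t_ge0 [s [v [s_ge0 Vv ->]]]; exists (t * s), v.
by rewrite scalerA mulr_ge0.
Qed.

Lemma coneD V y1 y2 : convex_closed V -> cone V y1 -> cone V y2 -> cone V (y1 + y2).
Proof.
move=> V_convex [t1 [v1 [t1_ge0 Vv1 ->]]] [t2 [v2 [t2_ge0 Vv2 ->]]].
have [t0|t_neq0] := eqVneq (t1 + t2) 0.
  have [-> ->] : t1 = 0 /\ t2 = 0 by split; lra.
  by exists 0, v1; rewrite !scale0r addr0.
exists (t1 + t2), ((t1 / (t1 + t2)) *: v1 + (t2 / (t1 + t2)) *: v2); split.
- exact: addr_ge0.
- apply: V_convex => //; rewrite ?divr_ge0 ?addr_ge0 //.
  by rewrite -mulrDl mulfV.
- by rewrite scalerDr !scalerA !(mulrC (t1 + t2)) !divfK.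
Qed.

End Cone.

Section ConvHull.
Context {R : realType} {X : normedModType R}.

Lemma conv_hull_sub (B : set X) : B `<=` conv_hull B.
Proof.
move=> b Bb; exists 1%N, (fun _ => 1), (fun _ => b).
by split=> //; rewrite big_ord1 ?scale1r.
Qed.

Lemma conv_hull_convex (B : set X) : convex_closed (conv_hull B).
Proof.
move=> w1 w2 a b a_ge0 b_ge0 ab [m [l1 [x1 [l1_ge0 l1_sum x1B ->]]]].
move=> [n [l2 [x2 [l2_ge0 l2_sum x2B ->]]]].
pose lam k := match fintype.split k with inl i => a * l1 i | inr j => b * l2 j end.
pose xs k := match fintype.split k with inl i => x1 i | inr j => x2 j end.
have splitl (i : 'I_m) : fintype.split (lshift n i) = inl i := unsplitK (inl i).
have splitr (j : 'I_n) : fintype.split (rshift m j) = inr j := unsplitK (inr j).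
exists (m + n)%N, lam, xs; split.
- by move=> k; rewrite /lam; case: fintype.split => i; apply: mulr_ge0.
- rewrite big_split_ord /lam.
  rewrite (eq_bigr (fun i => a * l1 i)) => [|i _]; last by rewrite splitl.
  rewrite (eq_bigr (fun j => b * l2 j)) => [|j _]; last by rewrite splitr.
  by rewrite -!mulr_sumr l1_sum l2_sum !mulr1.
- by move=> k; rewrite /xs; case: fintype.split.
- rewrite big_split_ord !scaler_sumr /lam /xs.
  by congr (_ + _); apply: eq_bigr => i _; rewrite ?splitl ?splitr scalerA.
Qed.

End ConvHull.

Section ConeDistance.
Context {R : realType} {X : normedModType R}.
Variable K : set X.
Hypothesis K0 : K 0.
Hypothesis KZ : forall t y, 0 <= t -> K y -> K (t *: y).
Hypothesis KD : forall y1 y2, K y1 -> K y2 -> K (y1 + y2).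

Definition cone_dist x := inf [set `|x - y| | y in K].

Lemma cone_dist_le x {y} : K y -> cone_dist x <= `|x - y|.
Proof.
by move=> Ky; apply: ge_inf; [exists 0 => _ [? _ <-] | exists y].
Qed.

Lemma cone_dist_ge x c : (forall y, K y -> c <= `|x - y|) -> c <= cone_dist x.
Proof.
by move=> c_le; apply: lb_le_inf; [exists `|x - 0|, 0 | move=> _ [y Ky <-]; exact: c_le].
Qed.

Lemma cone_dist_homog t x : 0 < t -> cone_dist (t *: x) = t * cone_dist x.
Proof.
move=> t_gt0; apply/eqP; rewrite eq_le; apply/andP; split.
  rewrite -ler_pdivrMl //; apply: cone_dist_ge => y Ky; rewrite ler_pdivrMl //.
  by have := cone_dist_le (t *: x) (KZ _ _ (ltW t_gt0) Ky); rewrite -scalerBr normrZ gtr0_norm.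
apply: cone_dist_ge => y Ky.
have tV_ge0 : 0 <= t^-1 by rewrite invr_ge0 ltW.
have := cone_dist_le x (KZ _ _ tV_ge0 Ky).
rewrite -(ler_pM2l t_gt0) => /le_trans; apply.
by rewrite -[X in X * _]gtr0_norm // -normrZ scalerBr scalerA mulfV ?gt_eqF // scale1r.
Qed.

Lemma cone_dist_subadd x y : cone_dist (x + y) <= cone_dist x + cone_dist y.
Proof.
rewrite -lerBlDr; apply: cone_dist_ge => y1 Ky1.
rewrite lerBlDl -lerBlDr; apply: cone_dist_ge => y2 Ky2.
rewrite lerBlDr; apply: le_trans (cone_dist_le _ (KD _ _ Ky1 Ky2)) _.
by rewrite opprD addrACA addrC ler_normD.
Qed.

End ConeDistance.

Section Separation.
Context {R : realType} {X : normedModType R}.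
Variables (W : set X) (z : X) (d : R).
Hypothesis W_convex : convex_closed W.
Hypothesis d_gt0 : 0 < d.
Hypothesis W_far : forall w, W w -> d <= `|z - w|.

Definition fattened_diff : set X :=
  [set z + u - w | u in [set u | `|u| <= d / 2] & w in W].

Lemma fattened_diff_convex : convex_closed fattened_diff.
Proof.
move=> _ _ a b a_ge0 b_ge0 ab [u1 u1_le [w1 Ww1 <-]] [u2 u2_le [w2 Ww2 <-]].
exists (a *: u1 + b *: u2); last exists (a *: w1 + b *: w2); last first.
- rewrite !scalerBr !scalerDr addrACA -opprD addrACA.
  by rewrite -scalerDl ab scale1r.
- exact: W_convex.
- rewrite /= (le_trans (ler_normD _ _)) // !normrZ !ger0_norm //.
  by have := ler_wpM2l a_ge0 u1_le; have := ler_wpM2l b_ge0 u2_le; nra.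
Qed.

Lemma cone_fattened_diff_far b0 y :
  W b0 -> cone fattened_diff y -> d / 2 <= `|b0 - z - y|.
Proof.
move=> Wb0 [t [_ [t_ge0 [u u_le [w Ww <-]] ->]]].
have t1_gt0 : 0 < 1 + t by lra.
pose c := (1 + t)^-1; have tc : (1 + t) * c = 1 by rewrite mulfV ?gt_eqF.
pose w' := c *: b0 + (t * c) *: w.
have c_ge0 : 0 <= c by rewrite invr_ge0 ltW.
have Ww' : W w'.
  apply: W_convex => //; first exact: mulr_ge0.
  by rewrite -[c in c + _]mul1r -mulrDl.
(* [(1 + t) *: w' = b0 + t *: w], and [w'] is at distance at least [d] from [z]. *)
have -> : b0 - z - t *: (z + u - w) = (1 + t) *: (w' - z) - t *: u.
  rewrite [(1 + t) *: (_ - _)]scalerBr /w' [in RHS]scalerDr !scalerA.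
  rewrite tc mulrCA tc mulr1 scale1r [(1 + t) *: z]scalerDl scale1r scalerBr scalerDr.
  by rewrite !opprD !opprK !addrA !(addrAC _ (t *: w)).
apply: le_trans (lerB_dist _ _); rewrite !normrZ !ger0_norm ?(ltW t1_gt0) //.
have := ler_wpM2l (ltW t1_gt0) (W_far _ Ww'); rewrite distrC.
have := mulr_ge0 t_ge0 (ltW d_gt0); have := ler_wpM2l t_ge0 u_le; have := d_gt0; lra.
Qed.

Lemma convex_separation b0 : W b0 -> exists2 f, is_dual f &
  exists2 delta, 0 < delta & forall w, W w -> f w + delta <= f z.
Proof.
move=> Wb0; have d2_gt0 : 0 < d / 2 by rewrite divr_gt0.
pose K := cone fattened_diff.
have K0 : K 0.
  exists 0, (z + 0 - b0); rewrite scale0r; split=> //.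
  by exists 0; [rewrite /= normr0 ltW | exists b0].
have KZ t y : 0 <= t -> K y -> K (t *: y) by exact: coneZ.
have KD y1 y2 : K y1 -> K y2 -> K (y1 + y2) by apply: coneD; exact: fattened_diff_convex.
pose q := cone_dist K.
have [f [f_lin f_le fx0]] :=
  hahn_banach q (cone_dist_subadd K K0 KD) (cone_dist_homog K K0 KZ) (b0 - z).
have q_le_norm x : q x <= `|x| by have := cone_dist_le K x K0; rewrite subr0.
have f_norm x : `|f x| <= `|x|.
  rewrite ler_norml lerNl -(linear_formN f_lin) -[X in _ <= X]normrN.
  by rewrite !(le_trans (f_le _)) ?q_le_norm.
have gap : d / 2 <= q (b0 - z).
  by apply: (cone_dist_ge K K0) => y Ky; apply: cone_fattened_diff_far.
have bz_gt0 : 0 < `|b0 - z| := lt_le_trans d2_gt0 (le_trans gap (q_le_norm _)).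
pose k := d / 2 / `|b0 - z|.
have k_gt0 : 0 < k by rewrite divr_gt0.
exists (fun x => - f x).
  split; first by move=> a x y; rewrite f_lin opprD mulrN.
  apply: linear_form_continuous => [a x y|x]; first by rewrite f_lin opprD mulrN.
  by rewrite normrN.
exists (k * q (b0 - z)); first by rewrite mulr_gt0 // (lt_le_trans d2_gt0 gap).
move=> w Ww.
have Ky : K (z + k *: (b0 - z) - w).
  rewrite -[_ - w]scale1r; exists 1, (z + k *: (b0 - z) - w); split=> //.
  exists (k *: (b0 - z)); last by exists w.
  by rewrite /= normrZ gtr0_norm // divfK ?gt_eqF.
have := le_trans (f_le _) (cone_dist_le K (z + k *: (b0 - z) - w) Ky); rewrite subrr normr0.
rewrite !(linear_formB f_lin) linear_formD // linear_formZ // fx0; lra.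
Qed.

End Separation.

Section Slices.
Context {R : realType} {X : normedModType R}.
Variables (A : set X) (M : R).
Hypothesis A_bounded : forall x, A x -> `|x| <= M.

Lemma slice_nonempty f e : is_dual f -> 0 < e -> A !=set0 -> slice A f e !=set0.
Proof.
move=> f_dual e_gt0 [z Az].
have f_sup : has_sup (f @` A).
  by split; [exists (f z), z | exact: dual_image_ubound f_dual A_bounded].
by have [_ [x Ax <-] fx] := sup_adherent e_gt0 f_sup; exists x.
Qed.

Lemma comb_slices_nonempty m (lam : 'I_m -> R) fs es :
  (forall i, is_dual (fs i) /\ 0 < es i) -> A !=set0 -> comb_slices A lam fs es !=set0.
Proof.
move=> fs_ok A_ne.
have /choice[xs xs_slice] : forall i, exists x, slice A (fs i) (es i) x.
  by move=> i; have [f_dual e_gt0] := fs_ok i; exact: slice_nonempty.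
by exists (\sum_(i < m) lam i *: xs i), xs.
Qed.

Lemma dist_le_diam (S : set X) x y : S `<=` A -> S x -> S y -> `|x - y| <= diam S.
Proof.
move=> SA Sx Sy; apply: ub_le_sup; last by exists x => //; exists y.
exists (M + M) => _ [x1 Sx1 [y1 Sy1 <-]].
by apply: le_trans (ler_normB _ _) (lerD _ _); apply: A_bounded; apply: SA.
Qed.

End Slices.

Section DeterminingCombinations.
Context {R : realType} {X : normedModType R}.

(* A convex combination of slices with its data indexed by [nat]; the entries
   beyond [cd_len] are irrelevant but are required to define genuine slices. *)
Record comb_data := CombData {
  cd_len : nat;
  cd_weight : nat -> R;
  cd_fun : nat -> X -> R;
  cd_width : nat -> R }.

Definition comb_of (A : set X) (c : comb_data) : set X :=
  comb_slices A (fun i : 'I_(cd_len c) => cd_weight c i)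
    (fun i => cd_fun c i) (fun i => cd_width c i).

Definition comb_data_ok (c : comb_data) :=
  [/\ forall i : 'I_(cd_len c), 0 < cd_weight c i,
      \sum_(i < cd_len c) cd_weight c i = 1
    & forall i, is_dual (cd_fun c i) /\ 0 < cd_width c i].

Lemma conv_comb_slices_data (A C : set X) :
  is_conv_comb_slices A C -> exists c, comb_data_ok c /\ C = comb_of A c.
Proof.
move=> [m [lam [fs [es [lam_gt0 lam_sum fs_ok ->]]]]].
pose ext T (g : 'I_m -> T) (t0 : T) i := oapp g t0 (insub i).
have extE T (g : 'I_m -> T) t0 (i : 'I_m) : ext T g t0 i = g i.
  by rewrite /ext -[nat_of_ord i]/(val i) valK.
exists (CombData m (ext _ lam 0) (ext _ fs (fun _ => 0)) (ext _ es 1)); split; last first.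
  by rewrite /comb_of /=; congr comb_slices; apply: funext => i; rewrite extE.
split=> /= [i||i]; first by rewrite extE.
  by rewrite -lam_sum; apply: eq_bigr => i _; rewrite extE.
rewrite /ext; case: insubP => [j _ _|_] /=; first exact: fs_ok.
by split; [exact: dual0 | exact: ltr01].
Qed.

(* Every slice of [A] contains, up to membership in [A], one of the [C j]. *)
Definition determining (A : set X) {I : Type} (C : I -> set X) :=
  forall f delta, is_dual f -> 0 < delta -> A !=set0 ->
  exists j, C j `<=` [set x | sup (f @` A) - delta < f x].

Lemma SCD_of_determining (I : countType) (A : set X) (C : I -> set X) M :
  (forall x, A x -> `|x| <= M) -> (forall j, is_conv_comb_slices A (C j)) ->
  determining A C -> SCD_set A.
Proof.
move=> A_bounded C_comb C_det.
have [cs cs_ok] := choice (fun j => conv_comb_slices_data A (C j) (C_comb j)).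
pose slice_at N :=
  if unpickle N is Some (j, i) then (cd_fun (cs j) i, cd_width (cs j) i) else (fun _ => 0, 1).
exists (fun N => (slice_at N).1), (fun N => (slice_at N).2).
split=> [N|B _ B_meets z Az].
  rewrite /slice_at; case: unpickle => [[j i]|]; last by split; [exact: dual0 | exact: ltr01].
  by have [[_ _ /(_ i)]] := cs_ok j.
apply: contrapT => /closure_gap[d d_gt0 far].
have [b0 [Bb0 _]] := B_meets 0%N.
have [g g_dual [delta delta_gt0 g_sep]] := convex_separation (conv_hull B) z d
  (conv_hull_convex B) d_gt0 far b0 (conv_hull_sub B b0 Bb0).
have [j Cj_sub] := C_det g delta g_dual delta_gt0 (ex_intro _ z Az).
have [[w_gt0 w_sum _] Cj] := cs_ok j.
have /choice[bs bs_ok] : forall i : 'I_(cd_len (cs j)),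
    exists b, B b /\ slice A (cd_fun (cs j) i) (cd_width (cs j) i) b.
  by move=> i; have := B_meets (pickle (j, val i)); rewrite /slice_at pickleK.
pose y := \sum_(i < cd_len (cs j)) cd_weight (cs j) i *: bs i.
have /Cj_sub/= g_y : C j y by rewrite Cj; exists bs; split=> // i; case: (bs_ok i).
have g_z : g z <= sup (g @` A).
  by apply: ub_le_sup; [exact: dual_image_ubound g_dual A_bounded | exists z].
have : g y <= g z - delta.
  rewrite /y (linear_form_sum g_dual.1) -[X in _ <= X]mul1r -w_sum mulr_suml.
  apply: ler_sum => i _; rewrite ler_pM2l //.
  by have := g_sep _ (conv_hull_sub B _ (bs_ok i).1); lra.
lra.
Qed.

End DeterminingCombinations.

Lemma separable_dense_seq {R : realType} {X : normedModType R} (A : set X) :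
  separable_set A ->
  exists a : nat -> X, forall c, A c -> forall eta, 0 < eta -> exists k, `|c - a k| < eta.
Proof.
move=> [D [_ /countable_injP[g g_inj] A_D]].
pose a k := xget 0 [set d | D d /\ g d = k].
exists a => c Ac eta eta_gt0.
have [d [Dd cd]] := A_D c Ac (ball c eta) (nbhsx_ballx c eta eta_gt0).
exists (g d); have [Da ga] : D (a (g d)) /\ g (a (g d)) = g d.
  exact: xgetPex (ex_intro (fun x => D x /\ g x = g d) d (conj Dd erefl)).
have -> : a (g d) = d := g_inj _ _ (mem_set Da) (mem_set Dd) ga.
by move: cd; rewrite -ball_normE.
Qed.

Section SmallCombinations.
Context {R : realType} {X : normedModType R}.
Variables (A : set X) (M : R) (a : nat -> X).
Hypothesis A_bounded : forall x, A x -> `|x| <= M.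
Hypothesis A_small : small_combinations_of_slices A.
Hypothesis a_dense : forall c, A c -> forall eta, 0 < eta -> exists k, `|c - a k| < eta.

Lemma small_combination_near g e r : is_dual g -> 0 < e -> 0 < r -> A !=set0 ->
  exists k C, [/\ is_conv_comb_slices A C, C `<=` slice A g e, C !=set0
                & forall x, C x -> `|x - a k| <= r].
Proof.
move=> g_dual e_gt0 r_gt0 A_ne; have r2_gt0 : 0 < r / 2 by rewrite divr_gt0.
have [C [C_comb C_slice C_diam]] := A_small g e g_dual e_gt0 (r / 2) r2_gt0.
have CA : C `<=` A by move=> x /C_slice[].
have [c Cc] : C !=set0.
  case: (C_comb) => m [lam [fs [es [_ _ fs_ok C_eq]]]].
  by rewrite C_eq; exact: comb_slices_nonempty A M A_bounded m lam fs es fs_ok A_ne.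
have [k ck] := a_dense c (CA c Cc) (r / 2) r2_gt0.
exists k, C; split=> // [|x Cx]; first by exists c.
have := dist_le_diam A M A_bounded C x c CA Cx Cc.
by have := ler_distD c x (a k); lra.
Qed.

Lemma determining_of_small_combinations :
  exists C : nat * nat -> set X, (forall j, is_conv_comb_slices A (C j)) /\ determining A C.
Proof.
have [C0 [C0_comb _ _]] := A_small _ _ dual0 ltr01 _ ltr01.
pose near_to k n C := is_conv_comb_slices A C /\ forall x, C x -> `|x - a k| <= n.+1%:R^-1.
have /choice[sel sel_ok] : forall p : nat * nat, exists C',
    is_conv_comb_slices A C' /\ ((exists C, near_to p.1 p.2 C) -> near_to p.1 p.2 C').
  move=> [k n]; have [[C nearC]|no_near] := pselect (exists C, near_to k n C).
    by exists C; split=> //; case: nearC.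
  by exists C0.
exists sel; split=> [p|g delta g_dual delta_gt0 A_ne]; first by case: (sel_ok p).
have [K K_gt0 g_le] := dual_bounded g_dual.
have bound_gt0 : 0 < delta / (4 * K) by rewrite divr_gt0 ?mulr_gt0.
have [n _ /(_ n (leqnn n)) r_small] := near_infty_natSinv_lt (PosNum bound_gt0).
set r := n.+1%:R^-1 in r_small.
have r_gt0 : 0 < r by rewrite invr_gt0.
have [k [C [C_comb C_slice [c Cc] C_near]]] :=
  small_combination_near g (delta / 2) r g_dual (divr_gt0 delta_gt0 (ltr0n _ 2)) r_gt0 A_ne.
have [_ /(_ (ex_intro _ C (conj C_comb C_near)))[_ sel_near]] := sel_ok (k, n).
exists (k, n) => y /sel_near /= y_near; rewrite -/r in y_near.
have [_ g_c] := C_slice c Cc.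
have g_cy : g c - g y <= K * (2 * r).
  rewrite -(linear_formB g_dual.1) (le_trans (ler_norm _)) // (le_trans (g_le _)) //.
  rewrite ler_pM2l // (le_trans (ler_distD (a k) c y)) // (distrC (a k) y).
  by have := C_near c Cc; lra.
by move: r_small; rewrite ltr_pdivlMr ?mulr_gt0 //; nra.
Qed.

End SmallCombinations.

Theorem theorem2p19 (R : realType) (X : completeNormedModType R) (A : set X) :
  separable_set A -> closed A -> convex_set A -> [bounded x | x in A] ->
  small_combinations_of_slices A -> SCD_set A.
Proof.
move=> A_sep _ _ A_bnd A_small.
have [M A_le] : exists M, forall x, A x -> `|x| <= M.
  by have [M [_ M_bnd]] := A_bnd; exists (M + 1); apply: M_bnd; rewrite ltrDl.
have [a a_dense] := separable_dense_seq A A_sep.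
have [C [C_comb C_det]] := determining_of_small_combinations A M a A_le A_small a_dense.
exact: SCD_of_determining A C M A_le C_comb C_det.
Qed.
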